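(* Let $n\ge 1$ and let $G_1,G_2$ be $(n+1)$-partite graphs whose clique complexes $X(G_1),X(G_2)$ are pure $n$-dimensional, $(n+1)$-partite and strongly gallery connected. Then $X(G_1\circledast G_2)$ is also a pure $n$-dimensional, $(n+1)$-partite, strongly gallery connected clique complex.
   Context: An $(n+1)$-partite graph is a graph $G=(V,E)$ with an ordered tuple $(V^0,\ldots,V^n)$ of pairwise disjoint independent sets with union $V$. For $(n+1)$-partite graphs $G_1=((V_1^0,\ldots,V_1^n),E_1)$, $G_2=((V_2^0,\ldots,V_2^n),E_2)$, the partite product $G_1\circledast G_2$ has ordered parts $(V_1^0\times V_2^0,\ldots,V_1^n\times V_2^n)$, and for $i\ne j$, $(a,b)\in V_1^i\times V_2^i$ and $(c,d)\in V_1^j\times V_2^j$ are adjacent iff $\{a,c\}\in E_1$ and $\{b,d\}\in E_2$ (no edges inside a part). The clique complex $X(G)$ is the simplicial complex of cliques of $G$; it is $n$-dimensional if the largest clique has $n+1$ vertices, and pure if every clique is contained in a clique of size $n+1$. The link of a clique $C$ is the clique complex of the subgraph induced on the set of vertices adjacent to all vertices of $C$. $X$ is strongly gallery connected if its 1-skeleton (the graph $G$) is connected and the 1-skeleton of every link of dimension $\ge 1$ is connected. *)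

From mathcomp Require Import all_boot.
Set Implicit Arguments. Unset Strict Implicit. Unset Printing Implicit Defensive.

(* An (n+1)-partite graph: a finite vertex type T, a colouring
   [part : T -> 'I_n.+1] (the i-th part is the fibre over i; the parts are
   thus pairwise disjoint with union T), and an adjacency relation [adj]. *)
Definition partite_graph (n : nat) (T : finType) (part : T -> 'I_n.+1)
  (adj : rel T) : Prop :=
  [/\ symmetric adj, irreflexive adj &
      forall x y, adj x y -> part x != part y].

(* Cliques of the graph = faces of the clique complex X(G)
   (the empty set is the empty face). *)
Definition is_clique (T : finType) (adj : rel T) (A : {set T}) : bool :=
  [forall x in A, forall y in A, (x != y) ==> adj x y].

Definition pure_ndim (n : nat) (T : finType) (adj : rel T) : Prop :=
  [/\ exists A : {set T}, is_clique adj A /\ #|A| = n.+1,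
      forall A : {set T}, is_clique adj A -> #|A| <= n.+1 &
      forall A : {set T}, is_clique adj A ->
        exists B : {set T}, [/\ A \subset B, is_clique adj B & #|B| = n.+1]].

Definition partite_complex (n : nat) (T : finType) (part : T -> 'I_n.+1)
  (adj : rel T) : Prop :=
  forall A : {set T}, is_clique adj A -> {in A &, injective part}.

Definition connected_on (T : finType) (adj : rel T) (S : {set T}) : Prop :=
  forall x y, x \in S -> y \in S ->
    connect [rel u v | [&& u \in S, v \in S & adj u v]] x y.

Definition link_set (T : finType) (adj : rel T) (C : {set T}) : {set T} :=
  [set v | [forall c in C, adj v c]].

(* The link of C (clique complex of the subgraph induced on link_set C)
   has dimension >= 1: it contains a clique with at least 2 vertices. *)
Definition link_dim_ge1 (T : finType) (adj : rel T) (C : {set T}) : Prop :=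
  exists B : {set T},
    [/\ B \subset link_set adj C, is_clique adj B & 1 < #|B|].

Definition strongly_gallery_connected (T : finType) (adj : rel T) : Prop :=
  connected_on adj [set: T] /\
  forall C : {set T}, is_clique adj C -> link_dim_ge1 adj C ->
    connected_on adj (link_set adj C).

Definition pprod_vert (n : nat) (T1 T2 : finType)
  (part1 : T1 -> 'I_n.+1) (part2 : T2 -> 'I_n.+1) : finType :=
  {p : T1 * T2 | part1 p.1 == part2 p.2}.

Definition pprod_part (n : nat) (T1 T2 : finType)
  (part1 : T1 -> 'I_n.+1) (part2 : T2 -> 'I_n.+1)
  (p : pprod_vert part1 part2) : 'I_n.+1 :=
  part1 (val p).1.

Definition pprod_adj (n : nat) (T1 T2 : finType)
  (part1 : T1 -> 'I_n.+1) (adj1 : rel T1)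
  (part2 : T2 -> 'I_n.+1) (adj2 : rel T2) : rel (pprod_vert part1 part2) :=
  fun p q => [&& part1 (val p).1 != part1 (val q).1,
                 adj1 (val p).1 (val q).1 & adj2 (val p).2 (val q).2].

Arguments pprod_vert {n T1 T2} part1 part2.
Arguments pprod_part {n T1 T2} part1 part2 p.
Arguments pprod_adj {n T1 T2} part1 adj1 part2 adj2 p q.

From mathcomp Require Import all_boot zify.
Set Implicit Arguments. Unset Strict Implicit. Unset Printing Implicit Defensive.

(* Every clique of G1 ⊛ G2 has pairwise distinct colours, hence at most n+1
   vertices, and facets B1, B2 of the factors give the facet of pairs of equally
   coloured vertices of B1 × B2; this yields purity.  For a clique C with
   |C| < n, with projections C1 and C2, every pair (F1, F2) of facets containing
   C1 and C2 gives a clique "block" of equally coloured pairs in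
   (F1 \ C1) × (F2 \ C2), contained in the link of C.  Strong gallery
   connectivity of the factors connects any two facets containing C1 (resp. C2)
   by a gallery of facets containing C1 (resp. C2).  Moving one factor at a time
   along such galleries, consecutive blocks share a vertex, because two adjacent
   facets share n > |C1| vertices; so the link of C is connected. *)

Lemma connect_ind (T : finType) (e : rel T) (P : T -> Prop) x :
  P x -> (forall y z, connect e x y -> P y -> e y z -> P z) ->
  forall y, connect e x y -> P y.
Proof.
move=> Px Pe y /connectP[p + ->]; elim/last_ind: p => [|p z IHp] //=.
rewrite rcons_path last_rcons => /andP[ep e_z]; apply: (Pe (last x p)) => //.
- by apply/connectP; exists p.
- exact: IHp.
Qed.

Lemma homo_connect (T T' : finType) (e : rel T) (e' : rel T') (f : T -> T') :
  {homo f : x y / e x y >-> e' x y} ->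
  forall x y, connect e x y -> connect e' (f x) (f y).
Proof.
move=> fe x _ /connectP[p ep ->]; apply/connectP.
by exists (map f p); [exact: homo_path ep | rewrite last_map].
Qed.

Definition linked (T : finType) (r : rel T) (A B : {set T}) : Prop :=
  {in A & B, forall x y, connect r x y}.

Lemma connect_linked (I T : finType) (e : rel I) (r : rel T) (P : I -> {set T}) i j :
  (forall a b, e a b -> linked r (P b) (P b) /\ exists2 z, z \in P a & z \in P b) ->
  linked r (P i) (P i) -> connect e i j -> linked r (P i) (P j).
Proof.
move=> Pe Pi; apply: (connect_ind (P := fun j => linked r (P i) (P j))) => //.
move=> a b _ Pia /Pe[Pb [z za zb]] x y xi yb.
exact: connect_trans (Pia x z xi za) (Pb z y zb yb).
Qed.

Lemma setD_nonempty (T : finType) (A B : {set T}) :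
  #|A| < #|B| -> exists x, x \in B :\: A.
Proof.
case: (set_0Vmem (B :\: A)) => [/eqP|[x Bx]]; last by exists x.
by rewrite setD_eq0 => /subset_leq_card; lia.
Qed.

Section CliqueComplex.

Variables (T : finType) (adj : rel T).

Lemma cliqueP (A : {set T}) :
  reflect {in A &, forall x y, x != y -> adj x y} (is_clique adj A).
Proof.
apply: (iffP forall_inP) => [cA x y Ax Ay|cA x Ax].
  by move/forall_inP: (cA x Ax) => /(_ y Ay) /implyP.
by apply/forall_inP => y Ay; apply/implyP; apply: cA.
Qed.

Lemma subset_clique (A B : {set T}) :
  A \subset B -> is_clique adj B -> is_clique adj A.
Proof.
by move=> /subsetP sAB /cliqueP cB; apply/cliqueP => x y /sAB Bx /sAB; apply: cB.
Qed.

Lemma linkP (C : {set T}) v :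
  reflect {in C, forall c, adj v c} (v \in link_set adj C).
Proof. by rewrite inE; apply: forall_inP. Qed.

Lemma link_setU1 (C : {set T}) u v :
  (v \in link_set adj (u |: C)) = adj v u && (v \in link_set adj C).
Proof.
apply/linkP/andP => [vL|[vu /linkP vC] c].
  by split; [apply: vL; rewrite setU11 | apply/linkP => c Cc; apply: vL; rewrite setU1r].
by rewrite in_setU1 => /predU1P[->|/vC].
Qed.

Lemma clique_setD_link (F C : {set T}) :
  is_clique adj F -> C \subset F -> F :\: C \subset link_set adj C.
Proof.
move=> /cliqueP cF /subsetP sCF; apply/subsetP => x /setDP[Fx xNC].
apply/linkP => c Cc; apply: cF => //; first exact: sCF.
by apply: contraNneq xNC => ->.
Qed.

Lemma clique_set0 : is_clique adj set0.
Proof. by apply/cliqueP => x y; rewrite inE. Qed.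

Lemma link_set0 : link_set adj set0 = [set: T].
Proof. by apply/setP => x; rewrite !inE; apply/forall_inP => c; rewrite inE. Qed.

Hypotheses (adj_sym : symmetric adj) (adj_irr : irreflexive adj).

Lemma link_notin (C : {set T}) v : v \in link_set adj C -> v \notin C.
Proof. by move=> /linkP vC; apply/negP => /vC; rewrite adj_irr. Qed.

Lemma clique_setU1 (C : {set T}) v :
  is_clique adj C -> v \in link_set adj C -> is_clique adj (v |: C).
Proof.
move=> /cliqueP cC /linkP vC; apply/cliqueP => x y.
rewrite !in_setU1 => /predU1P[->|Cx] /predU1P[->|Cy]; rewrite ?eqxx //.
- by move=> _; apply: vC.
- by move=> _; rewrite adj_sym; apply: vC.
- exact: cC.
Qed.

Lemma clique_linked (S A : {set T}) :
  A \subset S -> is_clique adj A ->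
  linked [rel u v | [&& u \in S, v \in S & adj u v]] A A.
Proof.
move=> /subsetP sAS /cliqueP cA x y Ax Ay.
have [->|xy] := eqVneq x y; first exact: connect0.
by apply: connect1; rewrite /= !sAS //= cA.
Qed.

Lemma link_dim_ge1_card (n : nat) (C : {set T}) :
  (forall A : {set T}, is_clique adj A -> #|A| <= n.+1) ->
  is_clique adj C -> link_dim_ge1 adj C -> #|C| < n.
Proof.
move=> bound cC [B [sBL cB /card_gt1P[x [y [Bx By xy]]]]].
have yL : y \in link_set adj (x |: C).
  by rewrite link_setU1 (subsetP sBL) // andbT; apply: (cliqueP _ cB); rewrite // eq_sym.
have xL := subsetP sBL x Bx.
have := bound _ (clique_setU1 (clique_setU1 cC xL) yL).
by rewrite !cardsU1 (link_notin yL) (link_notin xL).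
Qed.

End CliqueComplex.

Section Galleries.

Variables (n : nat) (T : finType) (adj : rel T).

Definition star_facet (C F : {set T}) : bool :=
  [&& is_clique adj F, #|F| == n.+1 & C \subset F].

Definition ridge_adj (C : {set T}) : rel {set T} :=
  fun F G => [&& star_facet C F, star_facet C G & n <= #|F :&: G|].

Lemma star_facetU1 (C F : {set T}) z :
  star_facet (z |: C) F = (z \in F) && star_facet C F.
Proof. by rewrite /star_facet subUset sub1set; case: (z \in F); rewrite /= ?andbF. Qed.

Lemma ridge_adj_refl (C F : {set T}) : star_facet C F -> ridge_adj C F F.
Proof.
move=> CF; rewrite /ridge_adj CF setIid /=.
by case/and3P: CF => _ /eqP ->.
Qed.

Lemma ridge_adj_subset (C D F G : {set T}) :
  C \subset D -> ridge_adj D F G -> ridge_adj C F G.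
Proof.
rewrite /ridge_adj /star_facet => sCD /and3P[/and3P[cF nF sDF] /and3P[cG nG sDG] ->].
by rewrite cF nF cG nG !(subset_trans sCD).
Qed.

Lemma ridge_adj_card (C F G : {set T}) :
  n <= #|C| -> star_facet C F -> star_facet C G -> ridge_adj C F G.
Proof.
move=> le_nC CF CG; rewrite /ridge_adj CF CG (leq_trans le_nC) //.
by apply: subset_leq_card; rewrite subsetI; case/and3P: CF => _ _ ->; case/and3P: CG.
Qed.

Hypotheses (adj_sym : symmetric adj) (adj_irr : irreflexive adj).
Hypotheses (adj_pure : pure_ndim n adj) (adj_sgc : strongly_gallery_connected adj).

Lemma link_star_facet (C : {set T}) v :
  is_clique adj C -> v \in link_set adj C -> exists2 F, star_facet C F & v \in F.
Proof.
move=> cC vL; have [_ _ extend] := adj_pure.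
have [F [+ cF nF]] := extend _ (clique_setU1 adj_sym cC vL).
by rewrite subUset sub1set => /andP[vF sCF]; exists F; rewrite /star_facet ?cF ?nF ?eqxx.
Qed.

(* Take a path x = z_0, ..., z_k = y in the link of C with x in F and y in G,
   and facets K_i containing z_i, z_(i+1) and C.  In F, K_0, ..., K_(k-1), G
   consecutive facets both contain some z_i |: C, so the hypothesis on the star
   of z_i |: C connects them. *)
Lemma star_gallery_step (C : {set T}) :
  is_clique adj C -> #|C| < n ->
  (forall z, z \in link_set adj C ->
     forall F G, star_facet (z |: C) F -> star_facet (z |: C) G ->
       connect (ridge_adj (z |: C)) F G) ->
  forall F G, star_facet C F -> star_facet C G -> connect (ridge_adj C) F G.
Proof.
move=> cC lt_Cn IHz F G CF CG.
have {}IHz z H K : z \in link_set adj C -> star_facet (z |: C) H ->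
    star_facet (z |: C) K -> connect (ridge_adj C) H K.
  move=> zL zH zK; apply: connect_sub (IHz z zL H K zH zK) => H' K' HK'.
  by apply/connect1/(ridge_adj_subset _ HK'); rewrite subsetUr.
move: (CF) (CG) => /and3P[cF /eqP nF sCF] /and3P[cG /eqP nG sCG].
have [x Fx] : exists x, x \in F :\: C by apply: setD_nonempty; lia.
have [y Gy] : exists y, y \in G :\: C by apply: setD_nonempty; lia.
have xL := subsetP (clique_setD_link cF sCF) x Fx.
have yL := subsetP (clique_setD_link cG sCG) y Gy.
have link_dim : link_dim_ge1 adj C.
  exists (F :\: C); split; first exact: clique_setD_link.
    exact: subset_clique (subsetDl _ _) cF.
  by rewrite cardsDS //; lia.
have [_ link_conn] := adj_sgc.
pose P z := forall H, star_facet (z |: C) H -> connect (ridge_adj C) F H.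
have: P y.
  apply: (connect_ind (P := P) _ _ (link_conn C cC link_dim x y xL yL)).
    move=> H xH; apply: (IHz x) => //.
    by rewrite star_facetU1 CF andbT; case/setDP: Fx.
  move=> u w _ Pu /and3P[uL wL uw] H wH.
  have wLu : w \in link_set adj (u |: C) by rewrite link_setU1 adj_sym uw.
  have [K] := link_star_facet (clique_setU1 adj_sym cC uL) wLu.
  rewrite star_facetU1 => /andP[uK CK] wK.
  by apply: connect_trans (Pu K _) (IHz w K H wL _ wH); rewrite star_facetU1 ?uK ?wK.
by apply; rewrite star_facetU1 CG andbT; case/setDP: Gy.
Qed.

Lemma star_gallery (C : {set T}) : is_clique adj C ->
  forall F G, star_facet C F -> star_facet C G -> connect (ridge_adj C) F G.
Proof.
move=> cC; have [k] := ubnPleq (n.+1 - #|C|).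
elim: k => [|k IHk] in C cC * => hk F G CF CG.
  by apply/connect1/ridge_adj_card => //; lia.
have [le_nC|lt_Cn] := leqP n #|C|; first exact/connect1/ridge_adj_card.
apply: star_gallery_step => // z zL; apply: IHk (clique_setU1 adj_sym cC zL) _.
by rewrite cardsU1 (link_notin adj_irr zL); lia.
Qed.

End Galleries.

Lemma facet_colors n (T : finType) (part : T -> 'I_n.+1) (adj : rel T) (B : {set T}) :
  partite_complex part adj -> is_clique adj B -> #|B| = n.+1 ->
  forall i, exists2 x, x \in B & part x = i.
Proof.
move=> pc cB nB i; have /imsetP[x Bx ->] : i \in part @: B.
  suff -> : part @: B = [set: 'I_n.+1] by rewrite inE.
  apply/eqP; rewrite eqEcard subsetT cardsT card_ord card_in_imset ?nB ?ltnSn //.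
  exact: pc cB.
by exists x.
Qed.

Section PartiteProduct.

Variables (n : nat) (T1 : finType) (part1 : T1 -> 'I_n.+1) (adj1 : rel T1).
Variables (T2 : finType) (part2 : T2 -> 'I_n.+1) (adj2 : rel T2).

Local Notation V := (pprod_vert part1 part2).
Local Notation padj := (pprod_adj part1 adj1 part2 adj2).

Definition pproj1 (A : {set V}) : {set T1} := [set (val r).1 | r in A].
Definition pproj2 (A : {set V}) : {set T2} := [set (val r).2 | r in A].
Definition pprod_set (A1 : {set T1}) (A2 : {set T2}) : {set V} :=
  [set r : V | ((val r).1 \in A1) && ((val r).2 \in A2)].

Lemma pprod_partE (r : V) : part1 (val r).1 = part2 (val r).2.
Proof. exact/eqP/(valP r). Qed.

Lemma pprod_partite_graph :
  symmetric adj1 -> symmetric adj2 -> partite_graph (pprod_part part1 part2) padj.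
Proof.
move=> sym1 sym2; split=> [r s|r|r s /and3P[] //].
- by rewrite /pprod_adj eq_sym sym1 sym2.
- by rewrite /pprod_adj eqxx.
Qed.

Lemma pprod_partite_complex : partite_complex (pprod_part part1 part2) padj.
Proof.
move=> A /cliqueP cA r s rA sA; apply: contra_eq => rs.
by case/and3P: (cA r s rA sA rs).
Qed.

Lemma pprod_clique_card (A : {set V}) : is_clique padj A -> #|A| <= n.+1.
Proof.
move=> cA; rewrite -(card_in_imset (pprod_partite_complex cA)).
by apply: leq_trans (max_card _) _; rewrite card_ord.
Qed.

Lemma pproj1_clique (A : {set V}) : is_clique padj A -> is_clique adj1 (pproj1 A).
Proof.
move=> /cliqueP cA; apply/cliqueP => _ _ /imsetP[r rA ->] /imsetP[s sA ->] rs.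
have /(cA r s rA sA)/and3P[] // : r != s by apply: contraNneq rs => ->.
Qed.

Lemma pproj2_clique (A : {set V}) : is_clique padj A -> is_clique adj2 (pproj2 A).
Proof.
move=> /cliqueP cA; apply/cliqueP => _ _ /imsetP[r rA ->] /imsetP[s sA ->] rs.
have /(cA r s rA sA)/and3P[] // : r != s by apply: contraNneq rs => ->.
Qed.

Hypotheses (pc1 : partite_complex part1 adj1) (pc2 : partite_complex part2 adj2).

Lemma pprod_set_clique (A1 : {set T1}) (A2 : {set T2}) :
  is_clique adj1 A1 -> is_clique adj2 A2 -> is_clique padj (pprod_set A1 A2).
Proof.
move=> cA1 cA2; apply/cliqueP => r s; rewrite !inE => /andP[r1 r2] /andP[s1 s2] rs.
have rs1 : (val r).1 != (val s).1.
  apply: contraNneq rs => rs1; apply/eqP/val_inj.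
  rewrite [val r]surjective_pairing [val s]surjective_pairing rs1.
  by congr pair; apply: (pc2 cA2) => //; rewrite -!pprod_partE rs1.
have prs : part1 (val r).1 != part1 (val s).1 by apply: contra_neq rs1; apply: (pc1 cA1).
have rs2 : (val r).2 != (val s).2 by apply: contra_neq prs; rewrite !pprod_partE => ->.
by rewrite /pprod_adj prs (cliqueP _ _ cA1) // (cliqueP _ _ cA2).
Qed.

Lemma pprod_set_card (B1 : {set T1}) (B2 : {set T2}) :
  is_clique adj1 B1 -> #|B1| = n.+1 -> is_clique adj2 B2 -> #|B2| = n.+1 ->
  #|pprod_set B1 B2| = n.+1.
Proof.
move=> cB1 nB1 cB2 nB2.
have cB := pprod_set_clique cB1 cB2.
rewrite -(card_in_imset (pprod_partite_complex cB)).
suff -> : pprod_part part1 part2 @: pprod_set B1 B2 = setT by rewrite cardsT card_ord.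
apply/setP => i; rewrite inE.
have [x B1x <-] := facet_colors pc1 cB1 nB1 i.
have [y B2y yx] := facet_colors pc2 cB2 nB2 (part1 x).
have xy : part1 x == part2 y by rewrite yx.
by apply/imsetP; exists (Sub (x, y) xy); rewrite // inE /= B1x B2y.
Qed.

Hypotheses (pure1 : pure_ndim n adj1) (pure2 : pure_ndim n adj2).

Lemma pprod_extend (A : {set V}) : is_clique padj A ->
  exists B : {set V}, [/\ A \subset B, is_clique padj B & #|B| = n.+1].
Proof.
move=> cA; have [_ _ ext1] := pure1; have [_ _ ext2] := pure2.
have [B1 [sAB1 cB1 nB1]] := ext1 _ (pproj1_clique cA).
have [B2 [sAB2 cB2 nB2]] := ext2 _ (pproj2_clique cA).
exists (pprod_set B1 B2); split; [|exact: pprod_set_clique|exact: pprod_set_card].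
apply/subsetP => r rA; rewrite inE (subsetP sAB1) ?(subsetP sAB2) //; exact: imset_f.
Qed.

Lemma pprod_pure_ndim : pure_ndim n padj.
Proof.
split; [|exact: pprod_clique_card|exact: pprod_extend].
have [B [_ cB nB]] := pprod_extend (clique_set0 padj).
by exists B.
Qed.

Hypotheses (pg1 : partite_graph part1 adj1) (pg2 : partite_graph part2 adj2).
Hypotheses (sgc1 : strongly_gallery_connected adj1).
Hypotheses (sgc2 : strongly_gallery_connected adj2).

Section Link.

Variable C : {set V}.
Hypotheses (cC : is_clique padj C) (lt_Cn : #|C| < n).

Local Notation C1 := (pproj1 C).
Local Notation C2 := (pproj2 C).
Local Notation link := (link_set padj C).
Local Notation link_rel := [rel u v | [&& u \in link, v \in link & padj u v]].

Lemma pproj1_link (p : V) : p \in link -> (val p).1 \in link_set adj1 C1.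
Proof.
by move=> /linkP pL; apply/linkP => _ /imsetP[c cC' ->]; case/and3P: (pL c cC').
Qed.

Lemma pproj2_link (p : V) : p \in link -> (val p).2 \in link_set adj2 C2.
Proof.
by move=> /linkP pL; apply/linkP => _ /imsetP[c cC' ->]; case/and3P: (pL c cC').
Qed.

Lemma mem_pproj1_of_part (F1 : {set T1}) x y :
  is_clique adj1 F1 -> C1 \subset F1 -> x \in F1 -> y \in C2 -> part1 x = part2 y ->
  x \in C1.
Proof.
move=> cF1 sCF1 xF1 /imsetP[c cC' ->] xc.
suff -> : x = (val c).1 by apply: imset_f.
by apply: (pc1 cF1) => //; [apply: (subsetP sCF1); apply: imset_f | rewrite pprod_partE].
Qed.

Lemma mem_pproj2_of_part (F2 : {set T2}) x y :
  is_clique adj2 F2 -> C2 \subset F2 -> y \in F2 -> x \in C1 -> part1 x = part2 y ->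
  y \in C2.
Proof.
move=> cF2 sCF2 yF2 /imsetP[c cC' ->] cy.
suff -> : y = (val c).2 by apply: imset_f.
by apply: (pc2 cF2) => //; [apply: (subsetP sCF2); apply: imset_f | rewrite -pprod_partE].
Qed.

Definition block (F : {set T1} * {set T2}) : {set V} :=
  pprod_set (F.1 :\: C1) (F.2 :\: C2).

Lemma block_sub_link (F1 : {set T1}) (F2 : {set T2}) :
  is_clique adj1 F1 -> C1 \subset F1 -> is_clique adj2 F2 -> C2 \subset F2 ->
  block (F1, F2) \subset link.
Proof.
move=> cF1 sCF1 cF2 sCF2; apply/subsetP => r; rewrite inE => /andP[r1 r2].
have /linkP a1 := subsetP (clique_setD_link cF1 sCF1) _ r1.
have /linkP a2 := subsetP (clique_setD_link cF2 sCF2) _ r2.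
have [_ _ col1] := pg1.
apply/linkP => c cC'.
have c1 : (val c).1 \in C1 by apply: imset_f.
have c2 : (val c).2 \in C2 by apply: imset_f.
by rewrite /pprod_adj col1 a1 ?a2.
Qed.

Lemma block_linked (F1 : {set T1}) (F2 : {set T2}) :
  star_facet n adj1 C1 F1 -> star_facet n adj2 C2 F2 ->
  linked link_rel (block (F1, F2)) (block (F1, F2)).
Proof.
move=> /and3P[cF1 _ sCF1] /and3P[cF2 _ sCF2].
apply: clique_linked; first exact: block_sub_link.
by apply: pprod_set_clique; apply: subset_clique (subsetDl _ _) _.
Qed.

Lemma block_meet1 (F1 G1 : {set T1}) (F2 : {set T2}) :
  ridge_adj n adj1 C1 F1 G1 -> star_facet n adj2 C2 F2 ->
  exists2 m, m \in block (F1, F2) & m \in block (G1, F2).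
Proof.
move=> /and3P[/and3P[cF1 _ sCF1] _ ridge] /and3P[cF2 /eqP nF2 _].
have [x] : exists x, x \in (F1 :&: G1) :\: C1.
  by apply: setD_nonempty; apply: leq_ltn_trans (leq_imset_card _ _) (leq_trans lt_Cn ridge).
rewrite in_setD in_setI => /and3P[xNC xF1 xG1].
have [y yF2 yx] := facet_colors pc2 cF2 nF2 (part1 x).
have yNC : y \notin C2.
  by apply: contraNN xNC => yC; apply: (mem_pproj1_of_part cF1 sCF1 xF1 yC).
have xy : part1 x == part2 y by rewrite yx.
by exists (Sub (x, y) xy); rewrite inE /= !in_setD ?xNC ?yNC ?xF1 ?xG1 ?yF2.
Qed.

Lemma block_meet2 (F1 : {set T1}) (F2 G2 : {set T2}) :
  star_facet n adj1 C1 F1 -> ridge_adj n adj2 C2 F2 G2 ->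
  exists2 m, m \in block (F1, F2) & m \in block (F1, G2).
Proof.
move=> /and3P[cF1 /eqP nF1 _] /and3P[/and3P[cF2 _ sCF2] _ ridge].
have [y] : exists y, y \in (F2 :&: G2) :\: C2.
  by apply: setD_nonempty; apply: leq_ltn_trans (leq_imset_card _ _) (leq_trans lt_Cn ridge).
rewrite in_setD in_setI => /and3P[yNC yF2 yG2].
have [x xF1 xy] := facet_colors pc1 cF1 nF1 (part2 y).
have xNC : x \notin C1.
  by apply: contraNN yNC => xC; apply: (mem_pproj2_of_part cF2 sCF2 yF2 xC).
have xy' : part1 x == part2 y by rewrite xy.
by exists (Sub (x, y) xy'); rewrite inE /= !in_setD ?xNC ?yNC ?xF1 ?yF2 ?yG2.
Qed.

Definition block_adj : rel ({set T1} * {set T2}) :=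
  fun F G => [&& ridge_adj n adj1 C1 F.1 G.1, ridge_adj n adj2 C2 F.2 G.2 &
                 (F.1 == G.1) || (F.2 == G.2)].

Lemma block_adj_linked F G : block_adj F G ->
  linked link_rel (block G) (block G) /\ exists2 m, m \in block F & m \in block G.
Proof.
case: F G => [F1 F2] [G1 G2] /and3P[/= ridge1 ridge2 same].
move: (ridge1) (ridge2) => /and3P[sF1 sG1 _] /and3P[sF2 sG2 _].
split; first exact: block_linked.
by case/orP: same => /eqP <-; [exact: block_meet2 sF1 ridge2 | exact: block_meet1 ridge1 sF2].
Qed.

Lemma pprod_link_connected : connected_on padj link.
Proof.
have [sym1 irr1 _] := pg1; have [sym2 irr2 _] := pg2.
have cC1 := pproj1_clique cC; have cC2 := pproj2_clique cC.
move=> p q pL qL.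
have p1L := pproj1_link pL; have p2L := pproj2_link pL.
have q1L := pproj1_link qL; have q2L := pproj2_link qL.
have [F1 sF1 pF1] := link_star_facet sym1 pure1 cC1 p1L.
have [F2 sF2 pF2] := link_star_facet sym2 pure2 cC2 p2L.
have [Q1 sQ1 qQ1] := link_star_facet sym1 pure1 cC1 q1L.
have [Q2 sQ2 qQ2] := link_star_facet sym2 pure2 cC2 q2L.
have pB : p \in block (F1, F2).
  by rewrite inE !in_setD pF1 pF2 (link_notin irr1 p1L) (link_notin irr2 p2L).
have qB : q \in block (Q1, Q2).
  by rewrite inE !in_setD qQ1 qQ2 (link_notin irr1 q1L) (link_notin irr2 q2L).
have gallery1 : connect block_adj (F1, F2) (Q1, F2).
  apply: (homo_connect (f := fun F => (F, F2)))
    (star_gallery sym1 irr1 pure1 sgc1 cC1 sF1 sQ1) => F G FG.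
  by rewrite /block_adj /= FG ridge_adj_refl // eqxx orbT.
have gallery2 : connect block_adj (Q1, F2) (Q1, Q2).
  apply: (homo_connect (f := fun F => (Q1, F)))
    (star_gallery sym2 irr2 pure2 sgc2 cC2 sF2 sQ2) => F G FG.
  by rewrite /block_adj /= FG ridge_adj_refl // eqxx.
have := connect_linked block_adj_linked (block_linked sF1 sF2) (connect_trans gallery1 gallery2).
exact.
Qed.

End Link.

Lemma pprod_strongly_gallery_connected :
  0 < n -> strongly_gallery_connected padj.
Proof.
have [sym1 _ _] := pg1; have [sym2 _ _] := pg2.
have [psym pirr _] := pprod_partite_graph sym1 sym2.
move=> n_gt0; split=> [|C cC dimC].
  by rewrite -(link_set0 padj); apply: pprod_link_connected; rewrite ?cards0 ?clique_set0.
exact/pprod_link_connected/(link_dim_ge1_card psym pirr pprod_clique_card cC dimC).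
Qed.

End PartiteProduct.

Theorem claim2p1 (n : nat) (hn : 1 <= n)
  (T1 : finType) (part1 : T1 -> 'I_n.+1) (adj1 : rel T1)
  (T2 : finType) (part2 : T2 -> 'I_n.+1) (adj2 : rel T2) :
  partite_graph part1 adj1 -> partite_graph part2 adj2 ->
  pure_ndim n adj1 -> partite_complex part1 adj1 ->
  strongly_gallery_connected adj1 ->
  pure_ndim n adj2 -> partite_complex part2 adj2 ->
  strongly_gallery_connected adj2 ->
  [/\ partite_graph (pprod_part part1 part2) (pprod_adj part1 adj1 part2 adj2),
      pure_ndim n (pprod_adj part1 adj1 part2 adj2),
      partite_complex (pprod_part part1 part2) (pprod_adj part1 adj1 part2 adj2) &
      strongly_gallery_connected (pprod_adj part1 adj1 part2 adj2)].
Proof.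
move=> pg1 pg2 pure1 pc1 sgc1 pure2 pc2 sgc2.
have [sym1 _ _] := pg1; have [sym2 _ _] := pg2.
split; [exact: pprod_partite_graph | exact: pprod_pure_ndim |
       exact: pprod_partite_complex | exact: pprod_strongly_gallery_connected].
Qed.
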